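(* If $Z_1,\dots,Z_S$ are i.i.d. $\mathcal N(0,1)$ random variables, then for every $\varepsilon\in(0,1)$, $$\mathrm P\left[\left|\frac1S\sum_{s=1}^S Z_s^2-1-\left(\frac1S\sum_{s=1}^S Z_s\right)^2\right|\ge\varepsilon\right]\le 3\exp\left\{\frac{-S\varepsilon^2}{25}\right\}.$$ *)

From HB Require Import structures.
From mathcomp Require Import all_boot all_order all_algebra.
From mathcomp Require Import all_classical all_reals all_analysis.
Set Implicit Arguments. Unset Strict Implicit. Unset Printing Implicit Defensive.
Import Order.TTheory GRing.Theory Num.Theory.
Local Open Scope classical_set_scope.
Local Open Scope ring_scope.

(* Mutual independence of a finite family of real random variables:
   for every family of Borel sets (B i)_i, the joint probability factorizes.
   Taking B i = setT for some i covers all subfamilies. *)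
Definition mutually_independent_RVs {d} {T : measurableType d} {R : realType}
  (P : probability T R) (n : nat) (Z : 'I_n -> {RV P >-> R}) : Prop :=
  forall B : 'I_n -> set R, (forall i, measurable (B i)) ->
    P (\bigcap_(i in [set: 'I_n]) (Z i @^-1` B i)) =
    (\prod_(i < n) fine (P (Z i @^-1` B i)))%:E.

Definition has_normal_law {d} {T : measurableType d} {R : realType}
  (P : probability T R) (X : {RV P >-> R}) (m s : R) : Prop :=
  forall A : set R, measurable A -> distribution P X A = normal_prob m s A.
Arguments mutually_independent_RVs {d T R} P {n} Z.
Arguments has_normal_law {d T R} P X m s.

From HB Require Import structures.
From mathcomp Require Import all_boot all_order all_algebra.
From mathcomp Require Import all_classical all_reals all_analysis.
From mathcomp Require Import measurable_realfun.
From mathcomp Require Import ring lra.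
Import Order.TTheory GRing.Theory Num.Theory.
Local Open Scope classical_set_scope.
Local Open Scope ring_scope.

(* With Q = sum_s Z_s^2 and L = sum_s Z_s, the deviation forces one of four one-sided
   events: Q >= S (1 + eps), Q <= S (1 - 3 eps / 4), L >= S sqrt(eps) / 2 or
   L <= - S sqrt(eps) / 2.  Each is bounded by a Chernoff bound.  By independence the
   moment generating function of sum_s g(Z_s) is the S-th power of that of g(Z), which
   for a standard Gaussian Z is exp(t^2 / 2) for g(x) = x and (1 - 2t)^(-1/2) for
   g(x) = x^2.  The choices t = eps / 6, 3 eps / 16 and sqrt(eps) / 2 give the bounds
   exp(-eps^2/25)^S twice and exp(-eps/8)^S twice, and their sum (or the trivial bound 1
   when S eps^2 is small) is at most 3 exp(-S eps^2 / 25).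
   Independence is used through E[prod_i f_i(Z_i)] = prod_i E[f_i(Z_i)] for nonnegative
   measurable f_i, obtained from the definition (indicator functions) by approximating
   one coordinate at a time with simple functions. *)

Lemma measurable_lee_fun d (T : measurableType d) (R : realType) (f g : T -> R) :
  measurable_fun setT f -> measurable_fun setT g -> measurable [set x | f x <= g x].
Proof. by move=> mf mg; rewrite -[X in measurable X]setTI; exact: measurable_fun_le. Qed.

Lemma le_measure_or4 {d} {T : measurableType d} {R : realType}
    (mu : {measure set T -> \bar R}) {E A B C D : set T} :
  measurable E -> measurable A -> measurable B -> measurable C -> measurable D ->
  (forall x, E x -> [\/ A x, B x, C x | D x]) ->
  (mu E <= mu A + mu B + mu C + mu D)%E.
Proof.
move=> mE mA mB mC mD EABCD.
have mAB : measurable (A `|` B) by exact: measurableU.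
have mABC : measurable (A `|` B `|` C) by exact: measurableU.
apply: (@le_trans _ _ (mu (A `|` B `|` C `|` D))).
  apply: le_measure; rewrite ?inE//; first exact: measurableU.
  by move=> x /EABCD[]; [left; left; left | left; left; right | left; right | right].
apply: le_trans (measureU2 _ mABC mD) _; rewrite leeD2r//.
apply: le_trans (measureU2 _ mAB mC) _; rewrite leeD2r//.
exact: measureU2.
Qed.

Section weighted_pushforward.
Local Open Scope ereal_scope.
Context d1 d2 (X : measurableType d1) (Y : measurableType d2) (R : realType).
Variables (mu : {measure set X -> \bar R}) (nu : {measure set Y -> \bar R}).
Variables (phi : X -> Y) (G : X -> R) (c : R).
Hypotheses (mphi : measurable_fun setT phi) (mG : measurable_fun setT G).
Hypotheses (G0 : forall x, (0 <= G x)%R) (c0 : (0 <= c)%R).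
Hypothesis weightedE : forall B, measurable B ->
  \int[mu]_x (\1_B (phi x) * G x)%:E = c%:E * nu B.

Import HBNNSimple.

Let ge0_integral_nnsfun_weighted (h : {nnsfun Y >-> R}) :
  \int[mu]_x (h (phi x) * G x)%:E = c%:E * \int[nu]_y (h y)%:E.
Proof.
have mh r : measurable (h @^-1` [set r]) by exact: measurable_funPTI.
have hr0 r y : (0 <= r * \1_(h @^-1` [set r]) y)%R.
  by rewrite -lee_fin EFinM nnfun_muleindic_ge0.
have mhr r : measurable_fun setT (fun y => r * \1_(h @^-1` [set r]) y)%R.
  by apply: measurable_funM => //; exact: measurable_indic.
have mhrG r : measurable_fun setT (fun x => r * \1_(h @^-1` [set r]) (phi x) * G x)%R.
  by apply/measurable_funM/mG/measurable_funM => //; exact: measurableT_comp.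
under eq_integral do rewrite fimfunE mulr_fsuml -fsumEFin//.
rewrite ge0_integral_fsum//; last 2 first.
- by move=> r; exact/measurable_EFinP.
- by move=> r x _; rewrite lee_fin mulr_ge0 ?hr0.
under [in RHS]eq_integral do rewrite fimfunE -fsumEFin//.
rewrite ge0_integral_fsum//; last 2 first.
- by move=> r; exact/measurable_EFinP.
- by move=> r y _; rewrite lee_fin hr0.
rewrite ge0_mule_fsumr; last by move=> r; apply: integral_ge0 => y _; rewrite lee_fin hr0.
apply: eq_fsbigr => _ /[!inE] -[y _ <-].
under eq_integral do rewrite -mulrA EFinM.
under [in RHS]eq_integral do rewrite EFinM.
have mhy : measurable_fun setT (\1_(h @^-1` [set h y]) : Y -> R).
  exact: measurable_indic.
have mhyG : measurable_fun setT (fun x => \1_(h @^-1` [set h y]) (phi x) * G x)%R.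
  by apply/measurable_funM/mG; exact: measurableT_comp.
have hy0 : 0 <= (h y)%:E by rewrite lee_fin.
rewrite !ge0_integralZl//; first by rewrite weightedE// integral_indic// setIT muleCA.
- exact/measurable_EFinP.
- exact/measurable_EFinP.
- by move=> x _; rewrite lee_fin mulr_ge0.
Qed.

Lemma ge0_integral_weighted_pushforward (f : Y -> R) :
  measurable_fun setT f -> (forall y, 0 <= f y)%R ->
  \int[mu]_x (f (phi x) * G x)%:E = c%:E * \int[nu]_y (f y)%:E.
Proof.
move=> mf f0.
have mEf : measurable_fun setT (EFin \o f) by exact/measurable_EFinP.
pose h := nnsfun_approx measurableT mEf.
have h_cvg y : (EFin \o h^~ y) @ \oo --> (f y)%:E.
  by apply: cvg_nnsfun_approx => // *; rewrite lee_fin.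
have h_nd y : nondecreasing_seq (h^~ y).
  by move=> m n mn; exact/lefP/nd_nnsfun_approx.
rewrite -ge0_integralZl//; last by move=> y _; rewrite lee_fin.
transitivity (limn (fun n => \int[mu]_x (h n (phi x) * G x)%:E)).
  rewrite -monotone_convergence//.
  - apply: eq_integral => x _; apply/esym/cvg_lim => //.
    rewrite EFinM; under eq_fun do rewrite EFinM.
    exact: cvgeZr (h_cvg (phi x)).
  - move=> n; apply/measurable_EFinP/measurable_funM => //.
    exact: measurableT_comp.
  - by move=> n x _; rewrite lee_fin mulr_ge0.
  - by move=> x _ m n mn; rewrite lee_fin ler_wpM2r// h_nd.
have -> : (fun n => \int[mu]_x (h n (phi x) * G x)%:E) =
          (fun n => \int[nu]_y (c%:E * (h n y)%:E)).
  apply/funext => n; rewrite ge0_integral_nnsfun_weighted ge0_integralZl//.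
  - exact/measurable_EFinP.
  - by move=> y _; rewrite lee_fin.
rewrite -monotone_convergence//.
- apply: eq_integral => y _; apply/cvg_lim => //.
  exact: cvgeZl (h_cvg y).
- by move=> n; apply: emeasurable_funM => //; exact/measurable_EFinP.
- by move=> n y _; rewrite lee_fin mulr_ge0.
- by move=> y _ m n mn; rewrite lee_fin ler_wpM2l// h_nd.
Qed.
End weighted_pushforward.
Arguments ge0_integral_weighted_pushforward {d1 d2 X Y R mu nu phi G c}.

Section expectation_prod.
Local Open Scope ereal_scope.
Context d (T : measurableType d) (R : realType) (P : probability T R).
Variables (n : nat) (Z : 'I_n -> {RV P >-> R}).
Hypothesis indepZ : mutually_independent_RVs P Z.

Lemma expectation_indic_comp (X : {RV P >-> R}) (B : set R) : measurable B ->
  \int[P]_w (\1_B (X w))%:E = P (X @^-1` B).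
Proof. by move=> mB; rewrite -[X @^-1` B]setIT -integral_indic//; exact: measurable_funPTI. Qed.

Lemma prod_indic_comp (B : 'I_n -> set R) w :
  (\prod_i (\1_(B i) (Z i w) : R) = \1_(\bigcap_(i in [set: 'I_n]) (Z i @^-1` B i)) w)%R.
Proof.
rewrite indicE; case: (boolP (w \in _)) => [/set_mem Bw|/negP Bw].
  by apply: big1 => i _; rewrite indicE mem_set//; exact: Bw.
have [i Bi] : exists i, ~ B i (Z i w).
  by apply/existsNP => allB; apply: Bw; apply/mem_set => i _; exact: allB.
by rewrite (bigD1 i)//= indicE memNset// mul0r.
Qed.

Let expectation_prod_indic (f : 'I_n -> R -> R) (m : 'I_n -> R) :
  (forall i, exists2 B, measurable B & f i = \1_B) ->
  (forall i, \int[P]_w (f i (Z i w))%:E = (m i)%:E) ->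
  \int[P]_w (\prod_i f i (Z i w))%:E = (\prod_i m i)%:E.
Proof.
move=> /(_ _)/cid2-/all_sig[B] /all_and2[mB /funext-> /=] Ef.
under eq_integral do rewrite prod_indic_comp.
rewrite integral_indic// ?setIT; last first.
  by apply: fin_bigcap_measurable => // i _; exact: measurable_funPTI.
apply: eq_trans (indepZ _ mB) _; congr EFin; apply: eq_bigr => i _.
by rewrite -expectation_indic_comp// Ef.
Qed.

Let expectation_prod_step (k0 : 'I_n) (f : 'I_n -> R -> R) (m : 'I_n -> R) :
  (forall i, measurable_fun setT (f i)) -> (forall i x, (0 <= f i x)%R) ->
  (forall i, \int[P]_w (f i (Z i w))%:E = (m i)%:E) ->
  (forall C, measurable C ->
    \int[P]_w (\1_C (Z k0 w) * \prod_(i | i != k0) f i (Z i w))%:E =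
    (\prod_(i | i != k0) m i)%:E * P (Z k0 @^-1` C)) ->
  \int[P]_w (\prod_i f i (Z i w))%:E = (\prod_i m i)%:E.
Proof.
move=> mf f0 Ef GE.
have m0 i : (0 <= m i)%R.
  by rewrite -lee_fin -Ef; apply: integral_ge0 => w _; rewrite lee_fin f0.
pose G w := (\prod_(i | i != k0) f i (Z i w))%R.
have mG : measurable_fun setT G.
  rewrite /G; under eq_fun do rewrite big_mkcond.
  apply: measurable_prod => i _; case: (i != k0) => //.
  exact: measurableT_comp.
have G0 w : (0 <= G w)%R by apply: prodr_ge0.
have c0 : (0 <= \prod_(i | i != k0) m i)%R by apply: prodr_ge0.
have mfk0 : measurable_fun setT (EFin \o f k0) by exact/measurable_EFinP.
under eq_integral do rewrite (bigD1 k0)//=.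
rewrite (ge0_integral_weighted_pushforward (nu := distribution P (Z k0)) _ mG G0 c0 GE)//.
rewrite ge0_integral_distribution//; last by move=> x; rewrite lee_fin.
by rewrite Ef [in RHS](bigD1 k0)//= EFinM muleC.
Qed.

Let expectation_prod_partial (J : {set 'I_n}) (f : 'I_n -> R -> R) (m : 'I_n -> R) :
  (forall i, i \notin J -> exists2 B, measurable B & f i = \1_B) ->
  (forall i, measurable_fun setT (f i)) -> (forall i x, (0 <= f i x)%R) ->
  (forall i, \int[P]_w (f i (Z i w))%:E = (m i)%:E) ->
  \int[P]_w (\prod_i f i (Z i w))%:E = (\prod_i m i)%:E.
Proof.
move: {2}#|J| (erefl #|J|) => k; elim: k J f m => [|k IH] J f m cardJ fJ mf f0 Ef.
  by apply: expectation_prod_indic Ef => i; apply: fJ; rewrite (cards0_eq cardJ) inE.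
have [k0 Jk0] : exists k0, k0 \in J by apply/set0Pn; rewrite -card_gt0 cardJ.
apply: (expectation_prod_step k0) => // C mC.
(* Turning f k0 into an indicator gives a family covered by the induction hypothesis. *)
pose f' i := if i == k0 then \1_C else f i.
pose m' i := if i == k0 then fine (P (Z k0 @^-1` C)) else m i.
have f'E w : (\prod_i f' i (Z i w) = \1_C (Z k0 w) * \prod_(i | i != k0) f i (Z i w))%R.
  rewrite (bigD1 k0)//= /f' eqxx; congr (_ * _)%R.
  by apply: eq_bigr => i /negbTE ->.
have m'E : (\prod_i m' i = fine (P (Z k0 @^-1` C)) * \prod_(i | i != k0) m i)%R.
  rewrite (bigD1 k0)//= /m' eqxx; congr (_ * _)%R.
  by apply: eq_bigr => i /negbTE ->.
have PC : P (Z k0 @^-1` C) \is a fin_num by apply: fin_num_measure; exact: measurable_funPTI.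
under eq_integral do rewrite -f'E.
rewrite (IH (J :\ k0) f' m').
- by rewrite m'E EFinM fineK// muleC.
- by apply/eqP; rewrite -eqSS -cardJ (cardsD1 k0 J) Jk0.
- move=> i; rewrite !inE negb_and negbK /f'.
  by case: eqP => [_ _|_ /fJ//]; exists C.
- by move=> i; rewrite /f'; case: eqP => // _; exact: measurable_indic.
- by move=> i x; rewrite /f'; case: eqP => // _; rewrite indicE.
- move=> i; rewrite /f' /m'; case: eqP => [->|_]; last exact: Ef.
  by rewrite expectation_indic_comp// fineK.
Qed.

Lemma expectation_prod (f : 'I_n -> R -> R) (m : 'I_n -> R) :
  (forall i, measurable_fun setT (f i)) -> (forall i x, (0 <= f i x)%R) ->
  (forall i, \int[P]_w (f i (Z i w))%:E = (m i)%:E) ->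
  \int[P]_w (\prod_i f i (Z i w))%:E = (\prod_i m i)%:E.
Proof. by apply: (expectation_prod_partial [set: 'I_n]) => i; rewrite inE. Qed.

End expectation_prod.
Arguments expectation_prod {d T R P n Z}.

Section standard_normal.
Local Open Scope ereal_scope.
Context {R : realType}.
Local Notation mu := (@lebesgue_measure R).

Lemma ge0_expectation_normal d (T : measurableType d) (P : probability T R)
    (X : {RV P >-> R}) (m s : R) (g : R -> R) :
  has_normal_law P X m s -> measurable_fun setT g -> (forall x, 0 <= g x)%R ->
  \int[P]_w (g (X w))%:E = \int[mu]_x (g x * normal_pdf m s x)%:E.
Proof.
move=> normalX mg g0.
(* [lebesgue_measure] lives on [measurableTypeR R], whose measurable sets are those of [R]. *)
have mid : measurable_fun (T := measurableTypeR R) (U := R) setT idfun.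
  by move=> _ B mB; rewrite setTI.
have lawX (B : set R) : measurable B ->
    \int[mu]_x (\1_B x * normal_pdf m s x)%:E = 1%:E * distribution P X B.
  move=> mB; rewrite mul1e normalX// /normal_prob [RHS]integral_mkcond.
  by apply: eq_integral => x _; rewrite /patch indicE; case: ifP; rewrite ?mul1r ?mul0r.
rewrite (ge0_integral_weighted_pushforward mid (measurable_normal_pdf m s)
  (normal_pdf_ge0 m s) ler01 lawX g mg g0) ?mul1e//.
by rewrite ge0_integral_distribution//; exact/measurable_EFinP.
Qed.

Lemma normal_pdf01E x : normal_pdf 0 1 x = (normal_peak 1 * expR (- x ^+ 2 / 2))%R :> R.
Proof. by rewrite normal_pdfE ?oner_neq0//= /normal_fun subr0 expr1n. Qed.

Lemma normal_peak1_div (s : R) : s != 0%R -> (normal_peak 1 / normal_peak s)%R = `|s|%R.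
Proof.
move=> s0; rewrite /normal_peak invrK expr1n mul1r -!mulrnAr sqrtrM ?sqr_ge0//.
by rewrite sqrtr_sqr mulrCA mulVf ?mulr1// sqrtr_eq0 -ltNge mulrn_wgt0// pi_gt0.
Qed.

Lemma integral_expR_normal (t : R) :
  \int[mu]_x (expR (t * x) * normal_pdf 0 1 x)%:E = (expR (t ^+ 2 / 2))%:E.
Proof.
have shiftE x : (expR (t * x) * normal_pdf 0 1 x = expR (t ^+ 2 / 2) * normal_pdf t 1 x)%R.
  rewrite normal_pdf01E normal_pdfE ?oner_neq0//= /normal_fun expr1n.
  rewrite mulrCA -expRD mulrCA -expRD; congr (_ * expR _)%R.
  by field; rewrite ?pnatr_eq0.
under eq_integral do rewrite shiftE EFinM.
rewrite ge0_integralZl ?integral_normal_pdf ?mule1//.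
- by apply/measurable_EFinP; exact: measurable_normal_pdf.
- by move=> x _; rewrite lee_fin normal_pdf_ge0.
Qed.

Lemma integral_expR_sq_normal (t : R) : (t < 1 / 2)%R ->
  \int[mu]_x (expR (t * x ^+ 2) * normal_pdf 0 1 x)%:E =
  ((Num.sqrt (1 - 2 * t))^-1)%:E.
Proof.
move=> t_lt; set s := ((Num.sqrt (1 - 2 * t))^-1)%R.
have a_gt0 : (0 < 1 - 2 * t)%R by lra.
have s_gt0 : (0 < s)%R by rewrite invr_gt0 sqrtr_gt0.
have s2 : (s ^+ 2 = (1 - 2 * t)^-1)%R by rewrite exprVn sqr_sqrtr// ltW.
have s0 : s != 0%R by rewrite gt_eqF.
have sE : s = (normal_peak 1 / normal_peak s)%R by rewrite normal_peak1_div ?gtr0_norm.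
have scaleE x : (expR (t * x ^+ 2) * normal_pdf 0 1 x = s * normal_pdf 0 s x)%R.
  rewrite normal_pdf01E normal_pdfE//= /normal_fun subr0 {1}sE mulrA divfK; last first.
    by rewrite gt_eqF// normal_peak_gt0.
  rewrite mulrCA -expRD s2; congr (_ * expR _)%R.
  by field; rewrite gt_eqF.
under eq_integral do rewrite scaleE EFinM.
rewrite ge0_integralZl ?integral_normal_pdf ?mule1//.
- by apply/measurable_EFinP; exact: measurable_normal_pdf.
- by move=> x _; rewrite lee_fin normal_pdf_ge0.
- by rewrite lee_fin; exact: ltW.
Qed.

End standard_normal.
Arguments ge0_expectation_normal {R d T P X m s g}.

Section rates.
Context {R : realType}.
Implicit Types (a e u v : R).

Lemma invsqrt_expR_le a u v : 0 < a -> 1 <= a * expR (2 * (v - u)) ->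
  (Num.sqrt a)^-1 * expR u <= expR v.
Proof.
move=> a0 h.
rewrite -(ler_pXn2r (isT : (0 < 2)%N)) ?nnegrE ?mulr_ge0 ?invr_ge0 ?sqrtr_ge0 ?expR_ge0//.
rewrite exprMn exprVn (sqr_sqrtr (ltW a0)) -!expRM_natl mulrC ler_pdivrMr//.
rewrite -[leLHS]mul1r; apply: le_trans (ler_wpM2r (expR_ge0 _) h) _.
by rewrite -mulrA -expRD mulrBr subrK mulrC.
Qed.

Lemma sq_upper_rate e : 0 < e -> e < 1 ->
  (Num.sqrt (1 - 2 * (e / 6)))^-1 * expR (- (e / 6 * (1 + e))) <= expR (- e ^+ 2 / 25).
Proof.
move=> e0 e1; apply: invsqrt_expR_le; first lra.
set y := (X in expR X).
have e2 : 0 <= e ^+ 2 * (1 - e) by apply: mulr_ge0; [exact: sqr_ge0 | lra].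
have key : 1 <= (1 - 2 * (e / 6)) * (1 + y) by rewrite /y; nra.
by apply: le_trans key _; rewrite ler_wpM2l ?expR_ge1Dx//; lra.
Qed.

Lemma sq_lower_rate e : 0 < e -> e < 1 ->
  (Num.sqrt (1 - 2 * - (3 * e / 16)))^-1 * expR (- (3 * e / 16 * - (1 - 3 * e / 4)))
    <= expR (- e ^+ 2 / 25).
Proof.
move=> e0 e1; apply: invsqrt_expR_le; first lra.
set y := (X in expR X).
have e2 : 0 <= e ^+ 2 * (1 - e) by apply: mulr_ge0; [exact: sqr_ge0 | lra].
have key : 1 <= (1 - 2 * - (3 * e / 16)) * (1 + y) by rewrite /y; nra.
by apply: le_trans key _; rewrite ler_wpM2l ?expR_ge1Dx//; lra.
Qed.

Lemma lin_rate e : 0 <= e ->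
  expR ((Num.sqrt e / 2) ^+ 2 / 2) * expR (- (Num.sqrt e / 2 * (Num.sqrt e / 2))) =
  expR (- (e / 8)).
Proof. by move=> e0; rewrite -expRD -expr2 expr_div_n sqr_sqrtr//; congr expR; field. Qed.

Lemma deviation_cases (s Q L e : R) : 0 < s -> 0 < e ->
  e <= `|s^-1 * Q - 1 - (s^-1 * L) ^+ 2| ->
  [\/ s * (1 + e) <= Q, Q <= s * (1 - 3 * e / 4),
      s * (Num.sqrt e / 2) <= L | L <= - (s * (Num.sqrt e / 2))].
Proof.
move=> s0 e0.
have [q ->] : exists q, Q = s * q by exists (s^-1 * Q); rewrite mulVKf ?gt_eqF.
have [l ->] : exists l, L = s * l by exists (s^-1 * L); rewrite mulVKf ?gt_eqF.
rewrite !mulKf ?gt_eqF// -mulrN !ler_pM2l// ler_normr => /orP[dev|dev].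
  by apply: Or41; have := sqr_ge0 l; lra.
have [q_small|q_large] := lerP q (1 - 3 * e / 4); first by apply: Or42; lra.
have r0 := sqrtr_ge0 e; have r2 : Num.sqrt e ^+ 2 = e by rewrite sqr_sqrtr// ltW.
have [l0|l0] := lerP 0 l; [apply: Or43 | apply: Or44]; nra.
Qed.

Lemma tail_le_3expR (n : nat) e (p : \bar R) : 0 < e -> e < 1 -> (p <= 1)%E ->
  (p <= (2 * expR (- e ^+ 2 / 25) ^+ n + 2 * expR (- (e / 8)) ^+ n)%:E)%E ->
  (p <= (3 * expR (- (n%:R * e ^+ 2) / 25))%:E)%E.
Proof.
move=> e0 e1 p1; rewrite -!expRM_natl.
(* If n e^2 / 25 <= 1/2 the bound p <= 1 suffices; otherwise n (e/8 - e^2/25) >= 1,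
   whence 2 exp(-n e/8) <= exp(-n e^2/25). *)
have -> : - (n%:R * e ^+ 2) / 25 = n%:R * (- e ^+ 2 / 25) by rewrite !mulNr mulrN mulrA.
set u := n%:R * (- e ^+ 2 / 25); set w := n%:R * - (e / 8).
have n0 : 0 <= n%:R :> R by [].
have [u_small|u_large] := lerP (- u) (1 / 2).
  by move=> _; apply: le_trans p1 _; rewrite lee_fin; have := expR_ge1Dx u; lra.
move=> pE; apply: le_trans pE _; rewrite lee_fin.
suff : 2 * expR w <= expR u by lra.
have -> : expR u = expR (u - w) * expR w by rewrite -expRD subrK.
rewrite ler_wpM2r ?expR_ge0//; have := expR_ge1Dx (u - w).
have e1' : 0 <= 1 - e by lra.
have := mulr_ge0 n0 (mulr_ge0 (ltW e0) e1').
rewrite /u /w in u_large *; nra.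
Qed.

End rates.
Arguments deviation_cases {R s Q L e}.

Lemma chernoff_fun {d} {T : measurableType d} {R : realType} (P : probability T R)
    (X : T -> R) (r a : R) : measurable_fun setT X -> 0 < r ->
  (P [set w | (a <= X w)%R] <= \int[P]_w (expR (r * X w))%:E * (expR (- (r * a)))%:E)%E.
Proof.
move=> mX r0.
have := chernoff (HB.pack X (isMeasurableFun.Build _ _ _ _ X mX) : {RV P >-> R}) a r0.
rewrite /mmt_gen_fun unlock /=.
by under eq_integral do rewrite mulrC.
Qed.

Section chernoff_normal_sum.
Context d (T : measurableType d) (R : realType) (P : probability T R).
Variables (n : nat) (Z : 'I_n -> {RV P >-> R}).
Hypothesis indepZ : mutually_independent_RVs P Z.
Hypothesis normalZ : forall i, has_normal_law P (Z i) 0 1.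

Lemma chernoff_normal_sum (g : R -> R) (t a M : R) :
  measurable_fun setT g -> 0 < t ->
  (\int[lebesgue_measure]_x (expR (t * g x) * normal_pdf 0 1 x)%:E = M%:E)%E ->
  (P [set w | (n%:R * a <= \sum_i g (Z i w))%R] <= ((M * expR (- (t * a))) ^+ n)%:E)%E.
Proof.
move=> mg t0 mgfM.
have mexp : measurable_fun setT (fun x => expR (t * g x)).
  by apply: measurableT_comp => //; exact: measurable_funM.
have mgf_sum : (\int[P]_w (expR (t * \sum_i g (Z i w)))%:E = (M ^+ n)%:E)%E.
  under eq_integral do rewrite mulr_sumr expR_sum.
  rewrite (expectation_prod indepZ (fun _ x => expR (t * g x)) (fun _ => M)).
  - by rewrite prodr_const card_ord.
  - by [].
  - by move=> i x; exact: expR_ge0.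
  - by move=> i; rewrite (ge0_expectation_normal (normalZ i) mexp (fun _ => expR_ge0 _)).
have msum : measurable_fun setT (fun w => \sum_i g (Z i w)).
  by apply: measurable_sum => i; exact: measurableT_comp.
apply: le_trans (chernoff_fun P _ _ _ msum t0) _.
by rewrite mgf_sum -EFinM exprMn -expRM_natl mulrN mulrCA.
Qed.

Let lee_expn (u v : R) : 0 <= u -> u <= v -> ((u ^+ n)%:E <= (v ^+ n)%:E)%E.
Proof. by move=> u0 uv; rewrite lee_fin lerXn2r ?nnegrE ?(le_trans u0). Qed.

Lemma sum_sq_upper_tail e : 0 < e -> e < 1 ->
  (P [set w | (n%:R * (1 + e) <= \sum_i Z i w ^+ 2)%R] <= (expR (- e ^+ 2 / 25) ^+ n)%:E)%E.
Proof.
move=> e0 e1.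
apply: le_trans (chernoff_normal_sum (fun x => x ^+ 2) (e / 6) _ _ _ _
  (integral_expR_sq_normal _ _)) (lee_expn _ _ _ (sq_upper_rate _ e0 e1)) => //; lra.
Qed.

Lemma sum_sq_lower_tail e : 0 < e -> e < 1 ->
  (P [set w | (\sum_i Z i w ^+ 2 <= n%:R * (1 - 3 * e / 4))%R] <= (expR (- e ^+ 2 / 25) ^+ n)%:E)%E.
Proof.
move=> e0 e1.
have -> : [set w | \sum_i Z i w ^+ 2 <= n%:R * (1 - 3 * e / 4)] =
          [set w | n%:R * - (1 - 3 * e / 4) <= \sum_i - Z i w ^+ 2].
  by apply/funext => w /=; rewrite sumrN mulrN lerN2.
have mgf : (\int[lebesgue_measure]_x (expR (3 * e / 16 * - x ^+ 2) * normal_pdf 0 1 x)%:E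
    = ((Num.sqrt (1 - 2 * - (3 * e / 16)))^-1)%:E)%E.
  by under eq_integral do rewrite mulrN -mulNr; apply: integral_expR_sq_normal; lra.
apply: le_trans (chernoff_normal_sum (fun x => - x ^+ 2) _ _ _ _ _ mgf)
  (lee_expn _ _ _ (sq_lower_rate _ e0 e1)) => //; try lra.
by apply: measurableT_comp => //; exact: measurable_funX.
Qed.

Lemma sum_upper_tail e : 0 < e ->
  (P [set w | (n%:R * (Num.sqrt e / 2) <= \sum_i Z i w)%R] <= (expR (- (e / 8)) ^+ n)%:E)%E.
Proof.
move=> e0.
apply: le_trans (chernoff_normal_sum id (Num.sqrt e / 2) _ _ _ _
  (integral_expR_normal _)) _ => //.
  by rewrite divr_gt0 ?sqrtr_gt0.
by rewrite (lin_rate _ (ltW e0)).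
Qed.

Lemma sum_lower_tail e : 0 < e ->
  (P [set w | (\sum_i Z i w <= - (n%:R * (Num.sqrt e / 2)))%R] <= (expR (- (e / 8)) ^+ n)%:E)%E.
Proof.
move=> e0.
have -> : [set w | \sum_i Z i w <= - (n%:R * (Num.sqrt e / 2))] =
          [set w | n%:R * (Num.sqrt e / 2) <= \sum_i - Z i w].
  by apply/funext => w /=; rewrite sumrN lerNr.
have mgf (t : R) : (\int[lebesgue_measure]_x (expR (t * - x) * normal_pdf 0 1 x)%:E
    = (expR (t ^+ 2 / 2))%:E)%E.
  by under eq_integral do rewrite mulrN -mulNr; rewrite integral_expR_normal sqrrN.
apply: le_trans (chernoff_normal_sum (fun x => - x) (Num.sqrt e / 2) _ _ _ _ (mgf _)) _ => //.
- exact: oppr_measurable.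
- by rewrite divr_gt0 ?sqrtr_gt0.
- by rewrite (lin_rate _ (ltW e0)).
Qed.

End chernoff_normal_sum.
Arguments sum_sq_upper_tail {d T R P n Z}.
Arguments sum_sq_lower_tail {d T R P n Z}.
Arguments sum_upper_tail {d T R P n Z}.
Arguments sum_lower_tail {d T R P n Z}.

Theorem lemma6 (d : measure_display) (T : measurableType d) (R : realType)
  (P : probability T R) (S : nat) (Z : 'I_S -> {RV P >-> R})
  (hS : (0 < S)%N)
  (hind : mutually_independent_RVs P Z)
  (hnorm : forall i, has_normal_law P (Z i) 0 1)
  (eps : R) (heps0 : 0 < eps) (heps1 : eps < 1) :
  (P [set w | (eps <= `| S%:R^-1 * (\sum_(s < S) Z s w ^+ 2) - 1
                        - (S%:R^-1 * (\sum_(s < S) Z s w)) ^+ 2 |)%R]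
   <= (3 * expR (- (S%:R * eps ^+ 2) / 25))%:E)%E.
Proof.
have S0 : 0 < S%:R :> R by rewrite ltr0n.
have mQ : measurable_fun setT (fun w => \sum_(s < S) Z s w ^+ 2).
  by apply: measurable_sum => s; exact: measurable_funX.
have mL : measurable_fun setT (fun w => \sum_(s < S) Z s w) by exact: measurable_sum.
set E := [set w | _].
have mE : measurable E.
  apply: measurable_lee_fun => //; apply: measurableT_comp => //.
  apply: measurable_funB; first by apply: measurable_funB => //; exact: measurable_funM.
  by apply: measurable_funX; exact: measurable_funM.
apply: (tail_le_3expR _ _ _ heps0 heps1 (probability_le1 _ mE)).
rewrite !mulr_natl !mulr2n !EFinD addeA.
apply: le_trans (le_measure_or4 P mE _ _ _ _ (fun w Ew => deviation_cases S0 heps0 Ew)) _;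
  try by apply: measurable_lee_fun.
exact: leeD (leeD (leeD (sum_sq_upper_tail hind hnorm _ heps0 heps1)
  (sum_sq_lower_tail hind hnorm _ heps0 heps1)) (sum_upper_tail hind hnorm _ heps0))
  (sum_lower_tail hind hnorm _ heps0).
Qed.
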